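(* Let $A$ be a real $m\times m$ matrix, $f$ in the range of $A$, $y$ the minimal-norm solution of $Ay=f$. Fix $q\in(0,1)$, $C>1$, $\varepsilon\in(0,1)$. For each $\delta\in(0,1)$ let $f_\delta\in\mathbb{R}^m$ with $\|f_\delta-f\|\le\delta$, and let $n_\delta$ be the smallest integer $n\ge1$ with $\|AT_{q^{n}}^{-1}A^*f_\delta-f_\delta\|\le C\delta^\varepsilon$. Then $$\lim_{\delta\to0}\frac{\delta}{\sqrt{q^{n_\delta}}}=0.$$
   Context: $A^*$ is the transpose of $A$, $T:=A^*A$, $T_a:=T+aI$ for $a>0$; $\|\cdot\|$ is the Euclidean norm. *)

From Stdlib Require Import Reals Lra Lia.
Open Scope R_scope.

(* Vectors in R^m are functions nat -> R (only indices < m matter);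
   m x m matrices are functions nat -> nat -> R (only indices < m matter). *)
Definition vec := nat -> R.
Definition mat := nat -> nat -> R.

Fixpoint rsum (m : nat) (g : nat -> R) : R :=
  match m with
  | O => 0
  | S k => rsum k g + g k
  end.

Definition mv (m : nat) (A : mat) (x : vec) : vec :=
  fun i => rsum m (fun j => A i j * x j).

Definition tmv (m : nat) (A : mat) (x : vec) : vec :=
  fun i => rsum m (fun j => A j i * x j).

Definition Tmat (m : nat) (A : mat) : mat :=
  fun i j => rsum m (fun k => A k i * A k j).

Definition vnorm (m : nat) (x : vec) : R := sqrt (rsum m (fun i => x i ^ 2)).

Definition vsub (x y : vec) : vec := fun i => x i - y i.

(* x = T_a^{-1} A^* g, i.e. (T + a I) x = A^* g (T_a is invertible for a > 0,
   so x is uniquely determined on indices < m). *)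
Definition is_Ta_inv_Astar (m : nat) (A : mat) (a : R) (g x : vec) : Prop :=
  forall i, (i < m)%nat -> rsum m (fun j => Tmat m A i j * x j) + a * x i = tmv m A g i.

Definition min_norm_solution (m : nat) (A : mat) (f y : vec) : Prop :=
  (forall i, (i < m)%nat -> mv m A y i = f i) /\
  (forall z : vec, (forall i, (i < m)%nat -> mv m A z i = f i) -> vnorm m y <= vnorm m z).

Definition in_range (m : nat) (A : mat) (f : vec) : Prop :=
  exists z : vec, forall i, (i < m)%nat -> mv m A z i = f i.

Definition discrepancy_ok (m : nat) (A : mat) (q C eps delta : R) (fd : vec) (n : nat) : Prop :=
  exists x : vec, is_Ta_inv_Astar m A (q ^ n) fd x /\
    vnorm m (vsub (mv m A x) fd) <= C * Rpower delta eps.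

From Stdlib Require Import Reals Lra Lia Psatz.
Open Scope R_scope.

(* For x = T_a^{-1} A^* g the residual r = Ax - g satisfies a x = - A^* r, and expanding
   |r|^2 against any solution y of A y = f gives the Tikhonov estimate
   |Ax - g|^2 <= |g - f|^2 + a |y|^2 / 2.
   The discrepancy principle fails at n_delta - 1 while |f_delta - f| <= delta <= delta^eps,
   so (C^2 - 1) delta^(2 eps) < q^(n_delta - 1) |y|^2 / 2, i.e. delta^(2 eps) = O(q^n_delta).
   Hence delta / sqrt (q^n_delta) = O(delta^(1 - eps)), which tends to 0.
   T_a is symmetric positive definite, so the defining system of T_a^{-1} A^* g is solvable:
   eliminate the last unknown and pass to the Schur complement. *)

Definition dot (m : nat) (x z : vec) : R := rsum m (fun i => x i * z i).

Definition sqnorm (m : nat) (x : vec) : R := rsum m (fun i => x i ^ 2).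

Definition solves (m : nat) (M : mat) (x b : vec) : Prop :=
  forall i, (i < m)%nat -> mv m M x i = b i.

Definition symmetric (m : nat) (M : mat) : Prop :=
  forall i j, (i < m)%nat -> (j < m)%nat -> M i j = M j i.

Definition pos_def (m : nat) (M : mat) : Prop :=
  forall x, dot m x (mv m M x) <= 0 -> forall i, (i < m)%nat -> x i = 0.

Lemma rsum_ext n f g : (forall i, (i < n)%nat -> f i = g i) -> rsum n f = rsum n g.
Proof.
  induction n as [|n IH]; intros H; simpl; [reflexivity|].
  rewrite IH by (intros; apply H; lia). rewrite H by lia. reflexivity.
Qed.

Lemma rsum_zero n : rsum n (fun _ => 0) = 0.
Proof. induction n as [|n IH]; simpl; [|rewrite IH]; ring. Qed.

Lemma rsum_lin n a b f g :
  rsum n (fun i => a * f i + b * g i) = a * rsum n f + b * rsum n g.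
Proof. induction n as [|n IH]; simpl; [|rewrite IH]; ring. Qed.

Lemma rsum_scal n c f : rsum n (fun i => c * f i) = c * rsum n f.
Proof. induction n as [|n IH]; simpl; [|rewrite IH]; ring. Qed.

Lemma rsum_le n f g : (forall i, (i < n)%nat -> f i <= g i) -> rsum n f <= rsum n g.
Proof.
  induction n as [|n IH]; intros H; simpl; [lra|].
  assert (rsum n f <= rsum n g) by (apply IH; intros; apply H; lia).
  assert (f n <= g n) by (apply H; lia). lra.
Qed.

Lemma rsum_swap n p F :
  rsum n (fun i => rsum p (fun j => F i j)) = rsum p (fun j => rsum n (fun i => F i j)).
Proof.
  induction n as [|n IH]; simpl; [now rewrite rsum_zero|].
  rewrite IH, <- (Rmult_1_l (rsum p _)), <- (Rmult_1_l (rsum p (fun j => F n j))).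
  rewrite <- rsum_lin. apply rsum_ext. intros; ring.
Qed.

Lemma rsum_delta n a x i : (i < n)%nat ->
  rsum n (fun j => (if Nat.eqb i j then a else 0) * x j) = a * x i.
Proof.
  induction n as [|n IH]; intros Hi; simpl; [lia|].
  destruct (Nat.eq_dec i n) as [->|Hne].
  - rewrite Nat.eqb_refl, (rsum_ext _ _ (fun _ => 0)), rsum_zero; [ring|].
    intros j Hj. destruct (Nat.eqb_spec n j); [lia|ring].
  - rewrite IH by lia. destruct (Nat.eqb_spec i n); [lia|ring].
Qed.

Lemma dot_comm m x z : dot m x z = dot m z x.
Proof. apply rsum_ext. intros; ring. Qed.

Lemma dot_diag m x : dot m x x = sqnorm m x.
Proof. apply rsum_ext. intros; ring. Qed.

Lemma dot_lin_r m x u v a b :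
  dot m x (fun i => a * u i + b * v i) = a * dot m x u + b * dot m x v.
Proof. unfold dot. rewrite <- rsum_lin. apply rsum_ext. intros; ring. Qed.

Lemma sqnorm_nonneg m x : 0 <= sqnorm m x.
Proof.
  rewrite <- (rsum_zero m). apply rsum_le. intros. apply pow2_ge_0.
Qed.

Lemma sqnorm_le0 m x : sqnorm m x <= 0 -> forall i, (i < m)%nat -> x i = 0.
Proof.
  induction m as [|m IH]; intros H i Hi; [lia|].
  unfold sqnorm in H; cbn [rsum] in H; fold (sqnorm m x) in H.
  pose proof (sqnorm_nonneg m x). pose proof (pow2_ge_0 (x m)).
  destruct (Nat.eq_dec i m) as [->|].
  - apply Rsqr_0_uniq. unfold Rsqr. nra.
  - apply IH; [lra|lia].
Qed.

Lemma dot_le_young m u v t : 0 < t ->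
  dot m u v <= t * sqnorm m u + / (4 * t) * sqnorm m v.
Proof.
  intros Ht. unfold sqnorm. rewrite <- rsum_lin. apply rsum_le. intros i _.
  assert (E : t * u i ^ 2 + / (4 * t) * v i ^ 2 - u i * v i
              = / (4 * t) * (2 * t * u i - v i) ^ 2) by (field; lra).
  assert (0 <= / (4 * t) * (2 * t * u i - v i) ^ 2).
  { apply Rmult_le_pos; [apply Rlt_le, Rinv_0_lt_compat; lra | apply pow2_ge_0]. }
  lra.
Qed.

Lemma dot_tmv m A u v : dot m u (tmv m A v) = dot m (mv m A u) v.
Proof.
  unfold dot, tmv, mv.
  transitivity (rsum m (fun i => rsum m (fun k => A k i * u i * v k))).
  { apply rsum_ext. intros. rewrite <- rsum_scal. apply rsum_ext. intros; ring. }
  rewrite rsum_swap. apply rsum_ext. intros.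
  rewrite Rmult_comm, <- rsum_scal. apply rsum_ext. intros; ring.
Qed.

Lemma mv_Tmat m A x i : mv m (Tmat m A) x i = tmv m A (mv m A x) i.
Proof.
  unfold Tmat, tmv, mv.
  transitivity (rsum m (fun j => rsum m (fun k => A k i * (A k j * x j)))).
  { apply rsum_ext. intros. rewrite Rmult_comm, <- rsum_scal. apply rsum_ext. intros; ring. }
  rewrite rsum_swap. apply rsum_ext. intros. now rewrite <- rsum_scal.
Qed.

Lemma tmv_vsub m A u v i : tmv m A (vsub u v) i = tmv m A u i - tmv m A v i.
Proof.
  unfold tmv.
  transitivity (rsum m (fun j => 1 * (A j i * u j) + (-1) * (A j i * v j))).
  - apply rsum_ext. intros. unfold vsub. ring.
  - rewrite rsum_lin. ring.
Qed.

Definition ext (k : nat) (x : vec) (c : R) : vec :=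
  fun j => if Nat.ltb j k then x j else c.

Definition schur (M : mat) (k : nat) : mat :=
  fun i j => M i j - M i k * M k j / M k k.

Lemma ext_lt k x c j : (j < k)%nat -> ext k x c j = x j.
Proof. intros Hj. unfold ext. now rewrite (proj2 (Nat.ltb_lt j k) Hj). Qed.

Lemma ext_last k x c : ext k x c k = c.
Proof. unfold ext. now rewrite Nat.ltb_irrefl. Qed.

Lemma mv_ext M k x c i : mv (S k) M (ext k x c) i = mv k M x i + M i k * c.
Proof.
  unfold mv. cbn [rsum]. rewrite ext_last. f_equal.
  apply rsum_ext. intros. now rewrite ext_lt.
Qed.

Lemma dot_ext k x c w : dot (S k) (ext k x c) w = dot k x w + c * w k.
Proof.
  unfold dot. cbn [rsum]. rewrite ext_last. f_equal.
  apply rsum_ext. intros. now rewrite ext_lt.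
Qed.

Lemma mv_schur M k x i : mv k (schur M k) x i = mv k M x i - M i k / M k k * mv k M x k.
Proof.
  unfold mv. rewrite <- (Rmult_1_l (rsum k (fun j => M i j * x j))).
  unfold Rminus. rewrite Ropp_mult_distr_l, <- rsum_lin.
  apply rsum_ext. intros. unfold schur. unfold Rdiv. ring.
Qed.

Lemma dot_col_symmetric M k x : symmetric (S k) M ->
  dot k x (fun i => M i k) = mv k M x k.
Proof. intros HM. apply rsum_ext. intros. rewrite HM by lia. ring. Qed.

Lemma quad_ext_schur M k x c : symmetric (S k) M -> M k k <> 0 ->
  dot (S k) (ext k x c) (mv (S k) M (ext k x c)) =
  dot k x (mv k (schur M k) x) + M k k * (c + mv k M x k / M k k) ^ 2.
Proof.
  intros HM Hd.
  assert (E1 : dot k x (mv (S k) M (ext k x c))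
              = dot k x (fun i => 1 * mv k M x i + c * M i k))
    by (apply rsum_ext; intros; rewrite mv_ext; ring).
  assert (E2 : dot k x (mv k (schur M k) x)
              = dot k x (fun i => 1 * mv k M x i + - (mv k M x k / M k k) * M i k))
    by (apply rsum_ext; intros; rewrite mv_schur; unfold Rdiv; ring).
  rewrite dot_ext, mv_ext, E1, E2, !dot_lin_r, dot_col_symmetric by exact HM.
  field. exact Hd.
Qed.

Lemma dot_zero_l m w : dot m (fun _ => 0) w = 0.
Proof. transitivity (rsum m (fun _ => 0)); [apply rsum_ext; intros; ring | apply rsum_zero]. Qed.

Lemma pos_def_diag M k : pos_def (S k) M -> 0 < M k k.
Proof.
  intros HM. destruct (Rlt_le_dec 0 (M k k)) as [|Hle]; [assumption|exfalso].
  assert (Hq : dot (S k) (ext k (fun _ => 0) 1) (mv (S k) M (ext k (fun _ => 0) 1)) = M k k).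
  { rewrite dot_ext, dot_zero_l, mv_ext.
    unfold mv. rewrite (rsum_ext k _ (fun _ => 0)), rsum_zero by (intros; ring). ring. }
  pose proof (HM (ext k (fun _ => 0) 1) ltac:(lra) k ltac:(lia)) as H0.
  rewrite ext_last in H0. lra.
Qed.

Lemma schur_symmetric M k : symmetric (S k) M -> symmetric k (schur M k).
Proof.
  intros HM i j Hi Hj. unfold schur.
  rewrite (HM i j), (HM i k), (HM k j) by lia. unfold Rdiv. ring.
Qed.

Lemma schur_pos_def M k : symmetric (S k) M -> pos_def (S k) M -> pos_def k (schur M k).
Proof.
  intros HM HP x Hq i Hi.
  assert (Hd := pos_def_diag M k HP).
  set (c := - (mv k M x k / M k k)).
  assert (Hz : dot (S k) (ext k x c) (mv (S k) M (ext k x c)) <= 0).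
  { rewrite quad_ext_schur by (assumption || lra).
    replace (c + mv k M x k / M k k) with 0 by (unfold c; ring). lra. }
  rewrite <- (ext_lt k x c i Hi). apply (HP _ Hz). lia.
Qed.

Lemma pos_def_solvable m M b : symmetric m M -> pos_def m M -> exists x, solves m M x b.
Proof.
  revert M b. induction m as [|k IH]; intros M b HM HP.
  { exists (fun _ => 0). intros i Hi. lia. }
  assert (Hd := pos_def_diag M k HP).
  destruct (IH (schur M k) (fun i => b i - M i k * b k / M k k)
              (schur_symmetric M k HM) (schur_pos_def M k HM HP)) as [x Hx].
  exists (ext k x ((b k - mv k M x k) / M k k)).
  intros i Hi. rewrite mv_ext.
  destruct (Nat.eq_dec i k) as [->|Hne].
  - field. lra.
  - specialize (Hx i ltac:(lia)). rewrite mv_schur in Hx. cbv beta in Hx.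
    assert (E : mv k M x i = b i - M i k * b k / M k k + M i k / M k k * mv k M x k) by lra.
    rewrite E. field. lra.
Qed.

Lemma Ta_inv_Astar_exists m A a g : 0 < a -> exists x, is_Ta_inv_Astar m A a g x.
Proof.
  intros Ha.
  set (M := fun i j => Tmat m A i j + (if Nat.eqb i j then a else 0)).
  assert (HM : forall x i, (i < m)%nat -> mv m M x i = mv m (Tmat m A) x i + a * x i).
  { intros x i Hi. rewrite <- (rsum_delta m a x i Hi).
    unfold mv. rewrite <- (Rmult_1_l (rsum m (fun j => Tmat m A i j * x j))).
    rewrite <- (Rmult_1_l (rsum m (fun j => (if Nat.eqb i j then a else 0) * x j))).
    rewrite <- rsum_lin. apply rsum_ext. intros. unfold M. ring. }
  destruct (pos_def_solvable m M (tmv m A g)) as [x Hx].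
  - intros i j _ _. unfold M, Tmat. rewrite Nat.eqb_sym. f_equal.
    apply rsum_ext. intros; ring.
  - intros x Hq. apply sqnorm_le0.
    assert (E : dot m x (mv m M x) = sqnorm m (mv m A x) + a * sqnorm m x).
    { rewrite <- !dot_diag, <- dot_tmv, <- (Rmult_1_l (dot m x (tmv m A _))), <- dot_lin_r.
      apply rsum_ext. intros. rewrite HM, mv_Tmat by assumption. ring. }
    pose proof (sqnorm_nonneg m (mv m A x)). pose proof (sqnorm_nonneg m x). nra.
  - exists x. intros i Hi. change (mv m (Tmat m A) x i + a * x i = tmv m A g i).
    rewrite <- HM by assumption. now apply Hx.
Qed.

Lemma dot_mv_of_Ta_inv m A a g x z : is_Ta_inv_Astar m A a g x ->
  dot m (mv m A z) (vsub (mv m A x) g) = - a * dot m z x.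
Proof.
  intros Hx. rewrite <- dot_tmv. unfold dot. rewrite <- (rsum_scal m (- a)).
  apply rsum_ext. intros i Hi.
  assert (Hxi : tmv m A g i = mv m (Tmat m A) x i + a * x i) by (symmetry; apply Hx, Hi).
  rewrite tmv_vsub, <- mv_Tmat, Hxi. ring.
Qed.

Lemma Ta_inv_residual_le m A a g f y x : 0 < a ->
  is_Ta_inv_Astar m A a g x -> solves m A y f ->
  sqnorm m (vsub (mv m A x) g) <= sqnorm m (vsub g f) + a * sqnorm m y / 2.
Proof.
  intros Ha Hx Hy.
  set (r := vsub (mv m A x) g).
  assert (Hsplit : sqnorm m r = dot m (mv m A x) r - dot m (mv m A y) r + dot m (vsub f g) r).
  { rewrite <- dot_diag.
    transitivity (rsum m (fun i => 1 * (mv m A x i * r i)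
                    + 1 * ((-1) * (mv m A y i * r i) + 1 * (vsub f g i * r i)))).
    - apply rsum_ext. intros i Hi. rewrite (Hy i Hi). unfold r, vsub. ring.
    - rewrite !rsum_lin. unfold dot. ring. }
  rewrite !dot_mv_of_Ta_inv with (1 := Hx), dot_diag in Hsplit.
  pose proof (dot_le_young m (vsub f g) r (/ 2) ltac:(lra)) as Hfg.
  pose proof (dot_le_young m x y 1 ltac:(lra)) as Hxy.
  rewrite dot_comm in Hxy.
  assert (Hsym : sqnorm m (vsub f g) = sqnorm m (vsub g f))
    by (apply rsum_ext; intros; unfold vsub; ring).
  replace (/ (4 * / 2)) with (/ 2) in Hfg by field.
  replace (/ (4 * 1)) with (/ 4) in Hxy by field.
  rewrite Hsym in Hfg. fold r. nra.
Qed.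

Lemma vnorm_le_sq m x c : 0 <= c -> vnorm m x <= c -> sqnorm m x <= c ^ 2.
Proof.
  intros Hc H. apply sqrt_le_0; [apply sqnorm_nonneg | apply pow2_ge_0 |].
  now rewrite sqrt_pow2.
Qed.

Lemma sq_lt_of_lt_vnorm m x c : 0 <= c -> c < vnorm m x -> c ^ 2 < sqnorm m x.
Proof. intros Hc H. apply sqrt_lt_0_alt. now rewrite sqrt_pow2. Qed.

Lemma Rpower_pos x e : 0 < Rpower x e.
Proof. apply exp_pos. Qed.

Lemma Rpower_le_1 x e : 0 < x <= 1 -> 0 <= e -> Rpower x e <= 1.
Proof.
  intros Hx He. replace 1 with (Rpower 1 e).
  - now apply Rle_Rpower_l.
  - unfold Rpower. now rewrite ln_1, Rmult_0_r, exp_0.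
Qed.

Lemma Rpower_split x e : 0 < x -> x = Rpower x (1 - e) * Rpower x e.
Proof.
  intros Hx. rewrite <- Rpower_plus. replace (1 - e + e) with 1 by ring.
  now rewrite Rpower_1.
Qed.

Lemma le_Rpower x e : 0 < x <= 1 -> e <= 1 -> x <= Rpower x e.
Proof.
  intros Hx He. rewrite (Rpower_split x e) at 1 by lra.
  pose proof (Rpower_le_1 x (1 - e) Hx ltac:(lra)). pose proof (Rpower_pos x e). nra.
Qed.

Lemma not_discrepancy_ok_lt m A f y q C eps delta g n :
  0 < q -> 0 <= C -> solves m A y f -> ~ discrepancy_ok m A q C eps delta g n ->
  (C * Rpower delta eps) ^ 2 < sqnorm m (vsub g f) + q ^ n * sqnorm m y / 2.
Proof.
  intros Hq HC Hy Hn.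
  assert (Hqn : 0 < q ^ n) by (apply pow_lt; lra).
  destruct (Ta_inv_Astar_exists m A (q ^ n) g Hqn) as [x Hx].
  assert (Hlt : C * Rpower delta eps < vnorm m (vsub (mv m A x) g)).
  { apply Rnot_le_lt. intros Hle. apply Hn. now exists x. }
  apply sq_lt_of_lt_vnorm in Hlt.
  - pose proof (Ta_inv_residual_le m A (q ^ n) g f y x Hqn Hx Hy). lra.
  - pose proof (Rpower_pos delta eps). nra.
Qed.

Lemma discrepancy_index_lower_bound m A f y q C eps delta g n :
  solves m A y f -> 0 < q < 1 -> 1 < C -> 0 < eps < 1 -> 0 < delta < 1 ->
  vnorm m (vsub g f) <= delta -> (1 <= n)%nat ->
  (forall k, (1 <= k)%nat -> (k < n)%nat -> ~ discrepancy_ok m A q C eps delta g k) ->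
  Rpower delta eps ^ 2 <= (/ q + sqnorm m y / (2 * q * (C ^ 2 - 1))) * q ^ n.
Proof.
  intros Hy Hq HC Heps Hd Hg Hn Hmin.
  set (D := Rpower delta eps). set (Y := sqnorm m y).
  assert (HY : 0 <= Y) by apply sqnorm_nonneg.
  assert (HC2 : 0 < C ^ 2 - 1) by nra.
  assert (HD1 : D <= 1) by (apply Rpower_le_1; lra).
  assert (HdD : delta <= D) by (apply le_Rpower; lra).
  assert (HD0 : 0 < D) by apply Rpower_pos.
  destruct n as [|[|k]]; [lia| |].
  - assert (0 <= Y / (2 * q * (C ^ 2 - 1)) * q).
    { apply Rmult_le_pos; [apply Rle_mult_inv_pos; nra | lra]. }
    replace ((/ q + Y / (2 * q * (C ^ 2 - 1))) * q ^ 1)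
      with (1 + Y / (2 * q * (C ^ 2 - 1)) * q) by (simpl; field; lra).
    nra.
  - pose proof (not_discrepancy_ok_lt m A f y q C eps delta g (S k) ltac:(lra) ltac:(lra)
                  Hy (Hmin (S k) ltac:(lia) ltac:(lia))) as Hlt.
    pose proof (vnorm_le_sq m (vsub g f) delta ltac:(lra) Hg).
    assert (Hqk : 0 < q ^ S k) by (apply pow_lt; lra).
    fold D Y in Hlt.
    apply (Rmult_le_reg_r (C ^ 2 - 1)); [exact HC2|].
    replace ((/ q + Y / (2 * q * (C ^ 2 - 1))) * q ^ S (S k) * (C ^ 2 - 1))
      with (q ^ S k * (C ^ 2 - 1) + q ^ S k * Y / 2) by (simpl; field; lra).
    nra.
Qed.

Lemma div_sqrt_le K a b c : 0 < a -> 0 <= b -> 0 <= c -> b ^ 2 <= K * a ->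
  c * b / sqrt a <= sqrt K * c.
Proof.
  intros Ha Hb Hc H.
  assert (HK : 0 <= K).
  { destruct (Rle_lt_dec 0 K); [assumption|]. pose proof (pow2_ge_0 b). nra. }
  assert (Hsa : 0 < sqrt a) by (now apply sqrt_lt_R0).
  assert (Hb' : b <= sqrt K * sqrt a).
  { rewrite <- sqrt_mult, <- (sqrt_pow2 b) by lra. now apply sqrt_le_1_alt. }
  apply (Rmult_le_reg_r (sqrt a)); [exact Hsa|].
  unfold Rdiv. rewrite Rmult_assoc, Rinv_l by lra. nra.
Qed.

Lemma limit1_in_0_of_le_Rpower (h : R -> R) c p : 0 <= c -> 0 < p ->
  (forall d, 0 < d < 1 -> Rabs (h d) <= c * Rpower d p) ->
  limit1_in h (fun d => 0 < d < 1) 0 0.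
Proof.
  intros Hc Hp Hh e He. simpl. unfold R_dist.
  set (t := e / (c + 1)).
  assert (Ht : 0 < t) by (apply Rdiv_lt_0_compat; lra).
  exists (Rpower t (/ p)). split; [apply Rpower_pos|].
  intros d [Hd Hdist]. rewrite Rminus_0_r in *. rewrite Rabs_pos_eq in Hdist by lra.
  assert (Hdp : Rpower d p < t).
  { replace t with (Rpower (Rpower t (/ p)) p).
    - apply Rlt_Rpower_l; lra.
    - rewrite Rpower_mult, Rinv_l, Rpower_1 by lra. reflexivity. }
  assert (c * t < e) by (unfold t; apply (Rmult_lt_reg_r (c + 1)); [lra|]; field_simplify; lra).
  pose proof (Hh d Hd). pose proof (Rpower_pos d p). nra.
Qed.

Theorem lemma3p5 (m : nat) (A : mat) (f y : vec)
  (hf : in_range m A f) (hy : min_norm_solution m A f y)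
  (q C eps : R) (hq : 0 < q < 1) (hC : 1 < C) (heps : 0 < eps < 1)
  (fd : R -> vec)
  (hfd : forall delta, 0 < delta < 1 -> vnorm m (vsub (fd delta) f) <= delta)
  (nd : R -> nat)
  (hnd : forall delta, 0 < delta < 1 ->
     (1 <= nd delta)%nat /\
     discrepancy_ok m A q C eps delta (fd delta) (nd delta) /\
     (forall n, (1 <= n)%nat -> (n < nd delta)%nat ->
        ~ discrepancy_ok m A q C eps delta (fd delta) n)) :
  limit1_in (fun delta => delta / sqrt (q ^ nd delta)) (fun delta => 0 < delta < 1) 0 0.
Proof.
  set (K := / q + sqnorm m y / (2 * q * (C ^ 2 - 1))).
  apply (limit1_in_0_of_le_Rpower _ (sqrt K) (1 - eps)); [apply sqrt_pos | lra |].
  intros delta Hd.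
  destruct (hnd delta Hd) as [Hn1 [_ Hmin]].
  pose proof (discrepancy_index_lower_bound m A f y q C eps delta (fd delta) (nd delta)
                (proj1 hy) hq hC heps Hd (hfd delta Hd) Hn1 Hmin) as Hlow.
  assert (Hqn : 0 < q ^ nd delta) by (apply pow_lt; lra).
  rewrite Rabs_pos_eq.
  - rewrite (Rpower_split delta eps) at 1 by lra.
    apply div_sqrt_le; [exact Hqn | apply Rlt_le, Rpower_pos .. | exact Hlow].
  - apply Rlt_le, Rdiv_lt_0_compat; [lra | now apply sqrt_lt_R0].
Qed.
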